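(* $(\overline{\mathcal{D}},\overline{\delta},\overline{\varepsilon})$ is a comonad on $\mathsf{CART}$.
   Context: Composition in diagrammatic order. $\mathsf{CART}$ is the category of categories with finite products and functors preserving finite products strictly ($\mathsf{F}(A\times B)=\mathsf{F}A\times\mathsf{F}B$, terminal object preserved, $\mathsf{F}(\pi_j)=\pi_j$). For $\mathbb{X}$ in $\mathsf{CART}$ let $\mathsf{P}(A)=A\times A$, $\mathsf{P}(f)=f\times f$. A pre-$\mathsf{D}$-sequence $f_\bullet:A\to B$ is $(f_0,f_1,\dots)$ with $f_n:\mathsf{P}^n(A)\to B$. Tangent $\mathsf{T}(f_\bullet):\mathsf{P}(A)\to\mathsf{P}(B)$, $\mathsf{T}(f_\bullet)_n=\langle\mathsf{P}^n(\pi_0)f_n,f_{n+1}\rangle$; differential $\mathsf{D}[f_\bullet]:\mathsf{P}(A)\to B$, $\mathsf{D}[f_\bullet]_n=f_{n+1}$. $\overline{\mathcal{D}}[\mathbb{X}]$ has objects those of $\mathbb{X}$, pre-$\mathsf{D}$-sequences as maps, identity $i_\bullet$ with $i_0=1$, $i_n=\pi_1\cdots\pi_1$ ($n$ times), composition $(f_\bullet\ast g_\bullet)_n=\mathsf{T}^n(f_\bullet)_0g_n$, and finite products: terminal object of $\mathbb{X}$, projections $i_\bullet\cdot\pi_j$ with $(i_\bullet\cdot\pi_j)_n=i_n\pi_j$, pairing $\langle f_\bullet,g_\bullet\rangle_n=\langle f_n,g_n\rangle$. For $\mathsf{F}$ in $\mathsf{CART}$, $\overline{\mathcal{D}}[\mathsf{F}]$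 is $\mathsf{F}$ on objects and $\overline{\mathcal{D}}[\mathsf{F}](f_\bullet)_n=\mathsf{F}(f_n)$. $\overline{\varepsilon}:\overline{\mathcal{D}}[\mathbb{X}]\to\mathbb{X}$ is the identity on objects and $f_\bullet\mapsto f_0$. $\overline{\delta}:\overline{\mathcal{D}}[\mathbb{X}]\to\overline{\mathcal{D}}[\overline{\mathcal{D}}[\mathbb{X}]]$ is the identity on objects and sends $f_\bullet$ to the pre-$\mathsf{D}$-sequence (of $\overline{\mathcal{D}}[\mathbb{X}]$) with $0$-th term $f_\bullet$ and $n$-th term $\mathsf{D}^n[f_\bullet]$. *)

Set Implicit Arguments.
Unset Strict Implicit.

Record CatData := {
  ob : Type;
  hom : ob -> ob -> Type;
  idm : forall A, hom A A;
  comp : forall A B C, hom A B -> hom B C -> hom A C;   (* comp f g = f ; g *)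
  term : ob;
  bang : forall A, hom A term;
  prod : ob -> ob -> ob;
  pi0 : forall A B, hom (prod A B) A;
  pi1 : forall A B, hom (prod A B) B;
  pair : forall C A B, hom C A -> hom C B -> hom C (prod A B)
}.
Arguments hom : clear implicits.
Arguments idm {c} A.
Arguments comp {c A B C} f g.
Arguments term {c}.
Arguments bang {c} A.
Arguments prod {c} A B.
Arguments pi0 {c} A B.
Arguments pi1 {c} A B.
Arguments pair {c C A B} f g.

Definition is_cart (X : CatData) : Prop :=
  (forall A B (f : hom X A B), comp (idm A) f = f) /\
  (forall A B (f : hom X A B), comp f (idm B) = f) /\
  (forall A B C D (f : hom X A B) (g : hom X B C) (h : hom X C D),
      comp (comp f g) h = comp f (comp g h)) /\
  (forall A (f : hom X A term), f = bang A) /\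
  (forall C A B (f : hom X C A) (g : hom X C B), comp (pair f g) (pi0 A B) = f) /\
  (forall C A B (f : hom X C A) (g : hom X C B), comp (pair f g) (pi1 A B) = g) /\
  (forall C A B (h : hom X C (prod A B)), pair (comp h (pi0 A B)) (comp h (pi1 A B)) = h).

(** The object-level strictness equalities F(A x B) = FA x FB and F(1) = 1 are
    recorded as (propositional) fields, so that they can be used for transport. *)
Record FunData (X Y : CatData) := {
  fob : ob X -> ob Y;
  fhom : forall A B, hom X A B -> hom Y (fob A) (fob B);
  fprod : forall A B, fob (prod A B) = prod (fob A) (fob B);
  fterm : fob term = term
}.
Arguments fob {X Y} f _.
Arguments fhom {X Y} f {A B} _.
Arguments fprod {X Y} f A B.
Arguments fterm {X Y} f.

Definition is_strict (X Y : CatData) (F : FunData X Y) : Prop :=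
  (forall A, fhom F (idm A) = idm (fob F A)) /\
  (forall A B C (f : hom X A B) (g : hom X B C), fhom F (comp f g) = comp (fhom F f) (fhom F g)) /\
  (forall A B, eq_rect _ (fun Z => hom Y Z (fob F A)) (fhom F (pi0 A B)) _ (fprod F A B)
               = pi0 (fob F A) (fob F B)) /\
  (forall A B, eq_rect _ (fun Z => hom Y Z (fob F B)) (fhom F (pi1 A B)) _ (fprod F A B)
               = pi1 (fob F A) (fob F B)).

Definition Fid (X : CatData) : FunData X X :=
  {| fob := fun A => A; fhom := fun A B f => f;
     fprod := fun A B => eq_refl; fterm := eq_refl |}.

Definition Fcomp (X Y Z : CatData) (F : FunData X Y) (G : FunData Y Z) : FunData X Z :=
  {| fob := fun A => fob G (fob F A);
     fhom := fun A B f => fhom G (fhom F f);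
     fprod := fun A B => eq_trans (f_equal (fob G) (fprod F A B)) (fprod G (fob F A) (fob F B));
     fterm := eq_trans (f_equal (fob G) (fterm F)) (fterm G) |}.

Definition hcast (Y : CatData) (A A' B B' : ob Y) (eA : A = A') (eB : B = B')
  (f : hom Y A B) : hom Y A' B' :=
  match eA in _ = A1 return hom Y A1 B' with
  | eq_refl => match eB in _ = B1 return hom Y A B1 with eq_refl => f end
  end.

Definition Feq (X Y : CatData) (F G : FunData X Y) : Prop :=
  exists e : forall A, fob F A = fob G A,
    forall A B (f : hom X A B), hcast (e A) (e B) (fhom F f) = fhom G f.

Section Dbar.
Variable X : CatData.

Fixpoint Pn (O : Type) (pr : O -> O -> O) (n : nat) (A : O) : O :=
  match n with 0 => A | S m => Pn pr m (pr A A) end.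
(* so P^{n+1}(A) = P^n(P(A)) definitionally *)

Definition Pmap A B (f : hom X A B) : hom X (prod A A) (prod B B) :=
  pair (comp (pi0 A A) f) (comp (pi1 A A) f).

Fixpoint Pnmap (n : nat) : forall A B, hom X A B -> hom X (Pn prod n A) (Pn prod n B) :=
  match n with
  | 0 => fun A B f => f
  | S m => fun A B f => Pnmap m (Pmap f)
  end.

Definition Dseq (A B : ob X) : Type := forall n, hom X (Pn prod n A) B.

Definition Tang A B (f : Dseq A B) : Dseq (prod A A) (prod B B) :=
  fun n => pair (comp (Pnmap n (pi0 A A)) (f n)) (f (S n)).

Fixpoint Tn (n : nat) : forall A B, Dseq A B -> Dseq (Pn prod n A) (Pn prod n B) :=
  match n with
  | 0 => fun A B f => f
  | S m => fun A B f => Tn m (Tang f)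
  end.

Definition Dcomp A B C (f : Dseq A B) (g : Dseq B C) : Dseq A C :=
  fun n => comp (Tn n f 0) (g n).

Fixpoint Did (n : nat) : forall A, hom X (Pn prod n A) A :=
  match n with
  | 0 => fun A => idm A
  | S m => fun A => comp (Did m (prod A A)) (pi1 A A)
  end.

Definition Dder A B (f : Dseq A B) : Dseq (prod A A) B := fun n => f (S n).

Fixpoint Diter (n : nat) : forall A B, Dseq A B -> Dseq (Pn prod n A) B :=
  match n with
  | 0 => fun A B f => f
  | S m => fun A B f => Diter m (Dder f)
  end.

Definition Dbar : CatData :=
  {| ob := ob X;
     hom := Dseq;
     idm := fun A n => Did n A;
     comp := Dcomp;
     term := term;
     bang := fun A n => bang (Pn prod n A);
     prod := @prod X;
     pi0 := fun A B n => comp (Did n (prod A B)) (pi0 A B);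
     pi1 := fun A B n => comp (Did n (prod A B)) (pi1 A B);
     pair := fun C A B f g n => pair (f n) (g n) |}.

Definition epsbar : FunData Dbar X :=
  {| fob := fun (A : ob Dbar) => (A : ob X);
     fhom := fun (A B : ob Dbar) (f : hom Dbar A B) => (f 0 : hom X A B);
     fprod := fun A B => eq_refl; fterm := eq_refl |}.

End Dbar.

Definition deltabar (X : CatData) : FunData (Dbar X) (Dbar (Dbar X)) :=
  {| fob := fun (A : ob (Dbar X)) => (A : ob (Dbar (Dbar X)));
     fhom := fun (A B : ob (Dbar X)) (f : hom (Dbar X) A B) =>
               ((fun n => Diter n f) : hom (Dbar (Dbar X)) A B);
     fprod := fun A B => eq_refl; fterm := eq_refl |}.

Fixpoint ePn (X Y : CatData) (F : FunData X Y) (n : nat) :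
  forall A, fob F (Pn prod n A) = Pn prod n (fob F A) :=
  match n with
  | 0 => fun A => eq_refl
  | S m => fun A => eq_trans (ePn F m (prod A A)) (f_equal (Pn prod m) (fprod F A A))
  end.

Definition DbarF (X Y : CatData) (F : FunData X Y) : FunData (Dbar X) (Dbar Y) :=
  {| fob := (fob F : ob (Dbar X) -> ob (Dbar Y));
     fhom := fun (A B : ob (Dbar X)) (f : hom (Dbar X) A B) =>
       (fun n => eq_rect _ (fun Z => hom Y Z (fob F B)) (fhom F (f n)) _ (ePn F n A))
         : hom (Dbar Y) (fob F A) (fob F B);
     fprod := fprod F;
     fterm := fterm F |}.

(** * Comonads on CART (objects: CatData satisfying is_cart;
      morphisms: FunData satisfying is_strict; equality of morphisms: Feq). *)
Definition is_comonad_on_CART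
  (Dob : CatData -> CatData)
  (Dmap : forall X Y, FunData X Y -> FunData (Dob X) (Dob Y))
  (eps : forall X, FunData (Dob X) X)
  (delta : forall X, FunData (Dob X) (Dob (Dob X))) : Prop :=
  (forall X, is_cart X -> is_cart (Dob X)) /\
  (forall X Y (F : FunData X Y), is_cart X -> is_cart Y -> is_strict F ->
      is_strict (Dmap X Y F)) /\
  (forall X, is_cart X -> Feq (Dmap X X (Fid X)) (Fid (Dob X))) /\
  (forall X Y Z (F : FunData X Y) (G : FunData Y Z),
      is_cart X -> is_cart Y -> is_cart Z -> is_strict F -> is_strict G ->
      Feq (Dmap X Z (Fcomp F G)) (Fcomp (Dmap X Y F) (Dmap Y Z G))) /\
  (forall X, is_cart X -> is_strict (eps X)) /\
  (forall X, is_cart X -> is_strict (delta X)) /\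
  (forall X Y (F : FunData X Y), is_cart X -> is_cart Y -> is_strict F ->
      Feq (Fcomp (Dmap X Y F) (eps Y)) (Fcomp (eps X) F)) /\
  (forall X Y (F : FunData X Y), is_cart X -> is_cart Y -> is_strict F ->
      Feq (Fcomp (Dmap X Y F) (delta Y))
          (Fcomp (delta X) (Dmap (Dob X) (Dob Y) (Dmap X Y F)))) /\
  (forall X, is_cart X -> Feq (Fcomp (delta X) (eps (Dob X))) (Fid (Dob X))) /\
  (forall X, is_cart X -> Feq (Fcomp (delta X) (Dmap (Dob X) X (eps X))) (Fid (Dob X))) /\
  (forall X, is_cart X ->
      Feq (Fcomp (delta X) (delta (Dob X)))
          (Fcomp (delta X) (Dmap (Dob X) (Dob (Dob X)) (delta X)))).
Arguments is_comonad_on_CART : clear implicits.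

From Stdlib Require Import ProofIrrelevance FunctionalExtensionality.
Set Implicit Arguments.
Unset Strict Implicit.

(* Everything is controlled by the tangent operator T.  T^n commutes with
   composition of pre-D-sequences and fixes the identity sequence, so Dbar X is
   a category, with products computed termwise.  A strict functor F commutes
   with T up to the transports F(P^n A) = P^n(F A), so Dbar F is again strict.
   The differential satisfies D^n[f * g] = T^n(f) * D^n[g], and deltabar
   commutes with T and preserves the sequences n |-> i_n ; h coming from maps
   of X, which makes deltabar strict.  The comonad laws then reduce to
   D^n[f]_0 = f_n and D^n[D^k f] = D^k[D^n f]. *)

Section CartesianCategory.
Variable X : CatData.
Hypothesis HX : is_cart X.

Lemma comp1m A B (f : hom X A B) : comp (idm A) f = f.
Proof. destruct HX as (h & _); apply h. Qed.

Lemma compm1 A B (f : hom X A B) : comp f (idm B) = f.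
Proof. destruct HX as (_ & h & _); apply h. Qed.

Lemma compA A B C D (f : hom X A B) (g : hom X B C) (h : hom X C D) :
  comp (comp f g) h = comp f (comp g h).
Proof. destruct HX as (_ & _ & h' & _); apply h'. Qed.

Lemma bang_unique A (f : hom X A term) : f = bang A.
Proof. destruct HX as (_ & _ & _ & h & _); apply h. Qed.

Lemma pair_pi0 C A B (f : hom X C A) (g : hom X C B) : comp (pair f g) (pi0 A B) = f.
Proof. destruct HX as (_ & _ & _ & _ & h & _); apply h. Qed.

Lemma pair_pi1 C A B (f : hom X C A) (g : hom X C B) : comp (pair f g) (pi1 A B) = g.
Proof. destruct HX as (_ & _ & _ & _ & _ & h & _); apply h. Qed.

Lemma pair_eta C A B (h : hom X C (prod A B)) :
  pair (comp h (pi0 A B)) (comp h (pi1 A B)) = h.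
Proof. destruct HX as (_ & _ & _ & _ & _ & _ & h'); apply h'. Qed.

Lemma comp_pair D C A B (h : hom X D C) (f : hom X C A) (g : hom X C B) :
  comp h (pair f g) = pair (comp h f) (comp h g).
Proof.
  rewrite <- (pair_eta (comp h (pair f g))), !compA, pair_pi0, pair_pi1.
  reflexivity.
Qed.

Lemma pair_pi (A B : ob X) : pair (pi0 A B) (pi1 A B) = idm (prod A B).
Proof. rewrite <- (pair_eta (idm _)), !comp1m. reflexivity. Qed.

Lemma Pmap_pi0 A B (f : hom X A B) : comp (Pmap f) (pi0 B B) = comp (pi0 A A) f.
Proof. apply pair_pi0. Qed.

Lemma Pmap_pi1 A B (f : hom X A B) : comp (Pmap f) (pi1 B B) = comp (pi1 A A) f.
Proof. apply pair_pi1. Qed.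

Lemma comp_Pmap C A B (h : hom X C (prod A A)) (v : hom X A B) :
  comp h (Pmap v) = pair (comp (comp h (pi0 A A)) v) (comp (comp h (pi1 A A)) v).
Proof. unfold Pmap. rewrite comp_pair, !compA. reflexivity. Qed.

Lemma Pmap_comp A B C (f : hom X A B) (g : hom X B C) :
  Pmap (comp f g) = comp (Pmap f) (Pmap g).
Proof.
  rewrite (comp_Pmap (Pmap f)), Pmap_pi0, Pmap_pi1, !compA. reflexivity.
Qed.

Lemma Pmap_id (A : ob X) : Pmap (idm A) = idm (prod A A).
Proof. unfold Pmap. rewrite !compm1. apply pair_pi. Qed.

Lemma Pnmap_comp n : forall A B C (f : hom X A B) (g : hom X B C),
  Pnmap n (comp f g) = comp (Pnmap n f) (Pnmap n g).
Proof. induction n; intros; [reflexivity|]. cbn [Pnmap]. rewrite Pmap_comp. apply IHn. Qed.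

Lemma Pnmap_id n : forall A : ob X, Pnmap n (idm A) = idm (Pn prod n A).
Proof. induction n; intros; [reflexivity|]. cbn [Pnmap]. rewrite Pmap_id. apply IHn. Qed.

Lemma Did_natural n : forall A B (f : hom X A B),
  comp (Pnmap n f) (Did n B) = comp (Did n A) f.
Proof.
  induction n; intros; simpl.
  - rewrite comp1m, compm1. reflexivity.
  - rewrite <- compA, IHn, !compA, Pmap_pi1. reflexivity.
Qed.

End CartesianCategory.

Section TangentCategory.
Variable X : CatData.
Hypothesis HX : is_cart X.

Lemma Dseq_ext A B (f g : @Dseq X A B) : (forall n, f n = g n) -> f = g.
Proof. intro H. apply functional_extensionality_dep. exact H. Qed.

Lemma Tang_Did (A : ob X) : Tang (fun n => Did n A) = (fun n => Did n (prod A A)).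
Proof.
  apply Dseq_ext; intro n. unfold Tang. cbn [Did].
  rewrite Did_natural by exact HX. apply pair_eta, HX.
Qed.

Lemma Tn_Did_seq n : forall A : ob X,
  Tn n (fun k => Did k A) = (fun k => Did k (Pn prod n A)).
Proof. induction n; intros; [reflexivity|]. cbn [Tn]. rewrite Tang_Did. apply IHn. Qed.

Lemma Tn_Did n : forall A B (f : @Dseq X A B), comp (Tn n f 0) (Did n B) = f n.
Proof.
  induction n; intros; simpl.
  - apply compm1, HX.
  - rewrite <- (compA HX). transitivity (comp (Tang f n) (pi1 B B)).
    + f_equal. apply IHn.
    + apply pair_pi1, HX.
Qed.

Lemma Tang_square A B A' B' (u : hom X A A') (v : hom X B B')
  (f : Dseq A B) (f' : Dseq A' B') :
  (forall n, comp (Pnmap n u) (f' n) = comp (f n) v) ->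
  forall n, comp (Pnmap n (Pmap u)) (Tang f' n) = comp (Tang f n) (Pmap v).
Proof.
  intros H n. unfold Tang.
  rewrite (comp_pair HX), (comp_Pmap HX), (pair_pi0 HX), (pair_pi1 HX). f_equal.
  - rewrite <- (compA HX), <- (Pnmap_comp HX), (Pmap_pi0 HX), (Pnmap_comp HX), !(compA HX), H.
    reflexivity.
  - exact (H (S n)).
Qed.

Lemma Tn_square m : forall A B A' B' (u : hom X A A') (v : hom X B B')
  (f : Dseq A B) (f' : Dseq A' B'),
  (forall n, comp (Pnmap n u) (f' n) = comp (f n) v) ->
  comp (Pnmap m u) (Tn m f' 0) = comp (Tn m f 0) (Pnmap m v).
Proof.
  induction m; intros A B A' B' u v f f' H; cbn [Tn Pnmap].
  - apply (H 0).
  - apply IHm, Tang_square, H.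
Qed.

Lemma Tang_Dcomp A B C (f : @Dseq X A B) (g : Dseq B C) :
  Tang (Dcomp f g) = Dcomp (Tang f) (Tang g).
Proof.
  apply Dseq_ext; intro k. unfold Dcomp, Tang at 1 3. cbn [Tn].
  rewrite (comp_pair HX). f_equal. rewrite <- !(compA HX). f_equal.
  apply Tn_square with (f := Tang f) (f' := f).
  intro n. unfold Tang. rewrite (pair_pi0 HX). reflexivity.
Qed.

Lemma Tn_Dcomp n : forall A B C (f : @Dseq X A B) (g : Dseq B C),
  Tn n (Dcomp f g) = Dcomp (Tn n f) (Tn n g).
Proof. induction n; intros; [reflexivity|]. cbn [Tn]. rewrite Tang_Dcomp. apply IHn. Qed.

Lemma Dbar_is_cart : is_cart (Dbar X).
Proof.
  repeat split; simpl; intros; apply Dseq_ext; intro n; unfold Dcomp.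
  - rewrite Tn_Did_seq. apply comp1m, HX.
  - apply Tn_Did.
  - change (comp (Tn n (Dcomp f g) 0) (h n) = comp (Tn n f 0) (comp (Tn n g 0) (h n))).
    rewrite Tn_Dcomp. apply compA, HX.
  - apply bang_unique, HX.
  - rewrite <- (compA HX), Tn_Did. apply pair_pi0, HX.
  - rewrite <- (compA HX), Tn_Did. apply pair_pi1, HX.
  - rewrite <- !(compA HX), !Tn_Did. apply pair_eta, HX.
Qed.

(* The image of a map [h] of X in Dbar X. *)
Definition lin (A B : ob X) (h : hom X A B) : Dseq A B := fun n => comp (Did n A) h.

Lemma lin_comp (A B C : ob X) (a : hom X A B) (b : hom X B C) :
  Dcomp (lin a) (lin b) = lin (comp a b).
Proof.
  apply Dseq_ext; intro n. unfold Dcomp, lin at 2.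
  rewrite <- (compA HX), Tn_Did. apply compA, HX.
Qed.

Lemma Tang_lin (A B : ob X) (h : hom X A B) : Tang (lin h) = lin (Pmap h).
Proof.
  apply Dseq_ext; intro n. unfold Tang, lin. rewrite (comp_Pmap HX). f_equal.
  rewrite <- (compA HX), (Did_natural HX). reflexivity.
Qed.

Lemma Tn_lin n : forall (A B : ob X) (h : hom X A B), Tn n (lin h) = lin (Pnmap n h).
Proof. induction n; intros; [reflexivity|]. cbn [Tn]. rewrite Tang_lin. apply IHn. Qed.

Lemma Dder_lin (A B : ob X) (h : hom X A B) : Dder (lin h) = lin (comp (pi1 A A) h).
Proof. apply Dseq_ext; intro n. apply compA, HX. Qed.

Lemma Diter_lin n : forall (A B : ob X) (h : hom X A B),
  Diter n (lin h) = lin (comp (Did n A) h).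
Proof.
  induction n; intros; cbn [Diter Did].
  - rewrite (comp1m HX). reflexivity.
  - rewrite Dder_lin, IHn, (compA HX). reflexivity.
Qed.

Lemma Diter_Dcomp n : forall (A B C : ob X) (f : Dseq A B) (g : Dseq B C),
  Diter n (Dcomp f g) = Dcomp (Tn n f) (Diter n g).
Proof. induction n; intros; [reflexivity|]. apply IHn. Qed.

Lemma Diter_pair n : forall (C A B : ob X) (f : Dseq C A) (g : Dseq C B),
  Diter n (fun k => pair (f k) (g k)) = (fun k => pair (Diter n f k) (Diter n g k)).
Proof. induction n; intros; [reflexivity|]. apply IHn. Qed.

Lemma Diter_zero n : forall (A B : ob X) (f : Dseq A B), Diter n f 0 = f n.
Proof. induction n; intros; [reflexivity|]. apply IHn. Qed.

End TangentCategory.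

(* [Dconj a b g] is [lin a * g * lin b], written without the identities. *)
Definition Dconj X (A B A' B' : ob X) (a : hom X A' A) (b : hom X B B') (g : Dseq A B) :
  Dseq A' B' :=
  fun n => comp (Pnmap n a) (comp (g n) b).

Section Conjugation.
Variable X : CatData.
Hypothesis HX : is_cart X.

Lemma Tang_Dconj (A B A' B' : ob X) (a : hom X A' A) (b : hom X B B') (g : Dseq A B) :
  Tang (Dconj a b g) = Dconj (Pmap a) (Pmap b) (Tang g).
Proof.
  apply Dseq_ext; intro n. unfold Tang, Dconj.
  rewrite (comp_Pmap HX), (pair_pi0 HX), (pair_pi1 HX), (comp_pair HX). f_equal.
  rewrite <- !(compA HX), <- !(Pnmap_comp HX), (Pmap_pi0 HX). reflexivity.
Qed.

Lemma Tn_Dconj m : forall (A B A' B' : ob X) (a : hom X A' A) (b : hom X B B') (g : Dseq A B),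
  Tn m (Dconj a b g) = Dconj (Pnmap m a) (Pnmap m b) (Tn m g).
Proof. induction m; intros; [reflexivity|]. cbn [Tn]. rewrite Tang_Dconj. apply IHm. Qed.

Lemma Diter_Dconj m : forall (A B A' B' : ob X) (a : hom X A' A) (b : hom X B B') (g : Dseq A B),
  Diter m (Dconj a b g) = Dconj (Pnmap m a) b (Diter m g).
Proof. induction m; intros; [reflexivity|]. apply IHm. Qed.

Lemma Dconj_comp (A B A' B' A'' B'' : ob X) (a : hom X A' A) (b : hom X B B')
  (a' : hom X A'' A') (b' : hom X B' B'') (g : Dseq A B) :
  Dconj a' b' (Dconj a b g) = Dconj (comp a' a) (comp b b') g.
Proof.
  apply Dseq_ext; intro n. unfold Dconj. rewrite (Pnmap_comp HX), !(compA HX). reflexivity.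
Qed.

Lemma Dconj_id (A B : ob X) (g : Dseq A B) : Dconj (idm A) (idm B) g = g.
Proof.
  apply Dseq_ext; intro n. unfold Dconj. rewrite (Pnmap_id HX), (comp1m HX), (compm1 HX).
  reflexivity.
Qed.

End Conjugation.

Definition hom_of_eq (C : CatData) (x y : ob C) (e : x = y) : hom C x y :=
  eq_rect x (hom C x) (idm x) y e.
Arguments hom_of_eq {C x y} e.

Section Transport.
Variable C : CatData.
Hypothesis HC : is_cart C.

Lemma hom_of_eq_irrelevant (x y : ob C) (p q : x = y) : hom_of_eq p = hom_of_eq q.
Proof. rewrite (proof_irrelevance _ p q). reflexivity. Qed.

Lemma hom_of_eq_trans (x y z : ob C) (p : x = y) (q : y = z) :
  hom_of_eq (eq_trans p q) = comp (hom_of_eq p) (hom_of_eq q).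
Proof. destruct q, p. symmetry. apply compm1, HC. Qed.

Lemma hom_of_eqK (x y : ob C) (p : x = y) :
  comp (hom_of_eq p) (hom_of_eq (eq_sym p)) = idm x.
Proof. destruct p. apply compm1, HC. Qed.

Lemma hom_of_eqVK (x y : ob C) (p : x = y) :
  comp (hom_of_eq (eq_sym p)) (hom_of_eq p) = idm y.
Proof. destruct p. apply compm1, HC. Qed.

Lemma eq_rect_dom (D x y : ob C) (e : x = y) (h : hom C x D) :
  eq_rect x (fun Z => hom C Z D) h y e = comp (hom_of_eq (eq_sym e)) h.
Proof. destruct e. symmetry. apply comp1m, HC. Qed.

Lemma Pnmap_hom_of_eq n (x y : ob C) (p : x = y) :
  Pnmap n (hom_of_eq p) = hom_of_eq (f_equal (Pn prod n) p).
Proof. destruct p. apply Pnmap_id, HC. Qed.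

Lemma comp_cancel (A B D : ob C) (a : hom C A B) (b : hom C B A)
  (e : comp a b = idm A) (h : hom C A D) : comp a (comp b h) = h.
Proof. rewrite <- (compA HC), e. apply comp1m, HC. Qed.

End Transport.

Lemma eq_rect_Dseq Y (C x y : ob (Dbar Y)) (e : x = y) (s : hom (Dbar Y) x C) :
  eq_rect x (fun Z : ob (Dbar Y) => hom (Dbar Y) Z C) s y e
  = (fun n => eq_rect _ (fun Z => hom Y Z C) (s n) _ (f_equal (Pn (@prod Y) n) e)).
Proof. destruct e. reflexivity. Qed.

Lemma eq_rect_lin Y (HY : is_cart Y) (C x y : ob Y) (e : x = y) (h : hom Y x C) :
  eq_rect x (fun Z : ob (Dbar Y) => hom (Dbar Y) Z C) (lin h) y e
  = lin (comp (hom_of_eq (eq_sym e)) h).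
Proof.
  destruct e. apply Dseq_ext; intro n. unfold lin; simpl. rewrite (comp1m HY). reflexivity.
Qed.

Section StrictFunctor.
Variables X Y : CatData.
Variable F : FunData X Y.
Hypotheses (HX : is_cart X) (HY : is_cart Y) (HF : is_strict F).

Lemma fhom_idm A : fhom F (idm A) = idm (fob F A).
Proof. destruct HF as (h & _); apply h. Qed.

Lemma fhom_comp A B C (f : hom X A B) (g : hom X B C) :
  fhom F (comp f g) = comp (fhom F f) (fhom F g).
Proof. destruct HF as (_ & h & _); apply h. Qed.

Lemma fhom_hom_of_eq (x y : ob X) (p : x = y) :
  fhom F (hom_of_eq p) = hom_of_eq (f_equal (fob F) p).
Proof. destruct p. apply fhom_idm. Qed.

Definition prodcmp (A B : ob X) := hom_of_eq (fprod F A B).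
Definition prodcmp_inv (A B : ob X) := hom_of_eq (eq_sym (fprod F A B)).
Definition Pncmp n (A : ob X) := hom_of_eq (ePn F n A).
Definition Pncmp_inv n (A : ob X) := hom_of_eq (eq_sym (ePn F n A)).

Lemma fhom_pi0 A B : fhom F (pi0 A B) = comp (prodcmp A B) (pi0 _ _).
Proof.
  destruct HF as (_ & _ & h & _). rewrite <- (h A B), (eq_rect_dom HY).
  unfold prodcmp. rewrite <- (compA HY), (hom_of_eqK HY), (comp1m HY). reflexivity.
Qed.

Lemma fhom_pi1 A B : fhom F (pi1 A B) = comp (prodcmp A B) (pi1 _ _).
Proof.
  destruct HF as (_ & _ & _ & h). rewrite <- (h A B), (eq_rect_dom HY).
  unfold prodcmp. rewrite <- (compA HY), (hom_of_eqK HY), (comp1m HY). reflexivity.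
Qed.

Lemma fhom_pair C A B (f : hom X C A) (g : hom X C B) :
  comp (fhom F (pair f g)) (prodcmp A B) = pair (fhom F f) (fhom F g).
Proof.
  rewrite <- (pair_eta HY (comp (fhom F (pair f g)) (prodcmp A B))), !(compA HY).
  rewrite <- fhom_pi0, <- fhom_pi1, <- !fhom_comp, (pair_pi0 HX), (pair_pi1 HX).
  reflexivity.
Qed.

Lemma fhom_Pmap A B (f : hom X A B) :
  comp (fhom F (Pmap f)) (prodcmp B B) = comp (prodcmp A A) (Pmap (fhom F f)).
Proof.
  unfold Pmap at 1. rewrite fhom_pair, !fhom_comp, fhom_pi0, fhom_pi1.
  rewrite (comp_Pmap HY), !(compA HY). reflexivity.
Qed.

Lemma Pncmp_S m A : Pncmp (S m) A = comp (Pncmp m (prod A A)) (Pnmap m (prodcmp A A)).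
Proof.
  unfold Pncmp, prodcmp. rewrite (Pnmap_hom_of_eq HY), <- (hom_of_eq_trans HY).
  apply hom_of_eq_irrelevant.
Qed.

Lemma Pncmp_inv_S m A :
  Pncmp_inv (S m) A = comp (Pnmap m (prodcmp_inv A A)) (Pncmp_inv m (prod A A)).
Proof.
  unfold Pncmp_inv, prodcmp_inv. rewrite (Pnmap_hom_of_eq HY), <- (hom_of_eq_trans HY).
  apply hom_of_eq_irrelevant.
Qed.

Lemma PncmpK n A : comp (Pncmp n A) (Pncmp_inv n A) = idm _.
Proof. apply hom_of_eqK, HY. Qed.

Lemma PncmpVK n A : comp (Pncmp_inv n A) (Pncmp n A) = idm _.
Proof. apply hom_of_eqVK, HY. Qed.

Lemma fhom_Pnmap n : forall A B (f : hom X A B),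
  comp (fhom F (Pnmap n f)) (Pncmp n B) = comp (Pncmp n A) (Pnmap n (fhom F f)).
Proof.
  induction n; intros.
  - simpl. rewrite (comp1m HY), (compm1 HY). reflexivity.
  - rewrite !Pncmp_S. simpl.
    rewrite <- (compA HY), IHn, !(compA HY), <- !(Pnmap_comp HY), fhom_Pmap.
    reflexivity.
Qed.

Lemma fhom_Pnmap_inv n A B (f : hom X A B) :
  comp (Pncmp_inv n A) (fhom F (Pnmap n f)) = comp (Pnmap n (fhom F f)) (Pncmp_inv n B).
Proof.
  transitivity (comp (Pncmp_inv n A)
    (comp (comp (fhom F (Pnmap n f)) (Pncmp n B)) (Pncmp_inv n B))).
  - rewrite (compA HY), PncmpK, (compm1 HY). reflexivity.
  - rewrite fhom_Pnmap, (compA HY), (comp_cancel HY (PncmpVK n A)). reflexivity.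
Qed.

Lemma fhom_Did n : forall A, fhom F (Did n A) = comp (Pncmp n A) (Did n (fob F A)).
Proof.
  induction n; intros.
  - simpl. rewrite fhom_idm, (comp1m HY). reflexivity.
  - simpl. rewrite fhom_comp, IHn, fhom_pi1, Pncmp_S, !(compA HY). f_equal.
    rewrite <- !(compA HY). f_equal. symmetry. apply (Did_natural HY).
Qed.

Lemma DbarF_at A B (f : @Dseq X A B) n :
  (fhom (DbarF F) f : @Dseq Y (fob F A) (fob F B)) n = comp (Pncmp_inv n A) (fhom F (f n)).
Proof. apply (eq_rect_dom HY). Qed.

Lemma DbarF_lin A B (h : hom X A B) :
  fhom (DbarF F) (lin h) = lin (fhom F h).
Proof.
  apply Dseq_ext; intro n. rewrite DbarF_at. unfold lin.
  rewrite fhom_comp, fhom_Did, (compA HY), (comp_cancel HY (PncmpVK n A)). reflexivity.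
Qed.

Lemma Tang_DbarF A B (f : @Dseq X A B) :
  Tang (fhom (DbarF F) f : @Dseq Y (fob F A) (fob F B))
  = Dconj (prodcmp_inv A A) (prodcmp B B) (fhom (DbarF F) (Tang f)).
Proof.
  apply Dseq_ext; intro n. unfold Dconj. rewrite DbarF_at. unfold Tang at 2.
  rewrite (compA HY), fhom_pair. unfold Tang. rewrite !DbarF_at, !(comp_pair HY). f_equal.
  - rewrite fhom_comp, <- !(compA HY). f_equal.
    rewrite (compA HY), fhom_Pnmap_inv, <- (compA HY), <- (Pnmap_comp HY), fhom_pi0.
    unfold prodcmp_inv, prodcmp. rewrite <- (compA HY), (hom_of_eqVK HY), (comp1m HY).
    reflexivity.
  - rewrite Pncmp_inv_S. apply compA, HY.
Qed.

Lemma Tn_DbarF n : forall A B (f : @Dseq X A B),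
  Tn n (fhom (DbarF F) f : @Dseq Y (fob F A) (fob F B))
  = Dconj (Pncmp_inv n A) (Pncmp n B) (fhom (DbarF F) (Tn n f)).
Proof.
  induction n; intros.
  - symmetry. apply Dconj_id, HY.
  - cbn [Tn]. rewrite Tang_DbarF, (Tn_Dconj HY), IHn, (Dconj_comp HY), Pncmp_inv_S, Pncmp_S.
    reflexivity.
Qed.

Lemma Dder_DbarF A B (f : @Dseq X A B) :
  Dder (fhom (DbarF F) f : @Dseq Y (fob F A) (fob F B))
  = Dconj (prodcmp_inv A A) (idm _)
      (fhom (DbarF F) (Dder f) : @Dseq Y (fob F (prod A A)) (fob F B)).
Proof.
  apply Dseq_ext; intro n. unfold Dder at 1, Dconj.
  rewrite !DbarF_at, Pncmp_inv_S, (compm1 HY), (compA HY). reflexivity.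
Qed.

Lemma Diter_DbarF n : forall A B (f : @Dseq X A B),
  Diter n (fhom (DbarF F) f : @Dseq Y (fob F A) (fob F B))
  = Dconj (Pncmp_inv n A) (idm _) (fhom (DbarF F) (Diter n f)).
Proof.
  induction n; intros.
  - symmetry. apply Dconj_id, HY.
  - cbn [Diter]. rewrite Dder_DbarF, Diter_Dconj, IHn, (Dconj_comp HY), Pncmp_inv_S, (compm1 HY).
    reflexivity.
Qed.

Lemma DbarF_strict : is_strict (DbarF F).
Proof.
  split; [|split; [|split]]; intros.
  - apply Dseq_ext; intro n. rewrite DbarF_at. simpl.
    rewrite fhom_Did, (comp_cancel HY (PncmpVK n A)). reflexivity.
  - apply Dseq_ext; intro n. rewrite DbarF_at.
    change (comp (Pncmp_inv n A) (fhom F (comp (Tn n f 0) (g n))) =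
      comp (Tn n (fhom (DbarF F) f : @Dseq Y (fob F A) (fob F B)) 0)
           ((fhom (DbarF F) g : @Dseq Y (fob F B) (fob F C)) n)).
    rewrite Tn_DbarF. unfold Dconj. rewrite !DbarF_at. simpl.
    rewrite (comp1m HY), fhom_comp, !(compA HY), (comp_cancel HY (PncmpK n B)).
    reflexivity.
  - change (eq_rect _ (fun Z : ob (Dbar Y) => hom (Dbar Y) Z (fob F A))
      (fhom (DbarF F) (@lin X _ _ (@pi0 X A B))) _ (fprod F A B)
      = @lin Y _ _ (@pi0 Y (fob F A) (fob F B))).
    rewrite DbarF_lin, (eq_rect_lin HY), <- (eq_rect_dom HY).
    destruct HF as (_ & _ & h & _). rewrite h. reflexivity.
  - change (eq_rect _ (fun Z : ob (Dbar Y) => hom (Dbar Y) Z (fob F B))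
      (fhom (DbarF F) (@lin X _ _ (@pi1 X A B))) _ (fprod F A B)
      = @lin Y _ _ (@pi1 Y (fob F A) (fob F B))).
    rewrite DbarF_lin, (eq_rect_lin HY), <- (eq_rect_dom HY).
    destruct HF as (_ & _ & _ & h). rewrite h. reflexivity.
Qed.

End StrictFunctor.

Section Comultiplication.
Variable X : CatData.
Hypothesis HX : is_cart X.

Lemma Did_Dbar n : forall A : ob X, Did (X := Dbar X) n A = lin (Did n A).
Proof.
  induction n; intros.
  - apply Dseq_ext; intro k. unfold lin. simpl. rewrite (compm1 HX). reflexivity.
  - cbn [Did]. rewrite IHn.
    change (Dcomp (lin (Did n (prod A A))) (lin (pi1 A A)) = lin (Did (S n) A)).
    rewrite (lin_comp HX). reflexivity.
Qed.

Lemma Pmap_Dbar_lin (A B : ob X) (h : hom X A B) :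
  Pmap (X := Dbar X) (lin h) = lin (Pmap h).
Proof.
  unfold Pmap at 1.
  change ((fun n => pair (Dcomp (lin (pi0 A A)) (lin h) n) (Dcomp (lin (pi1 A A)) (lin h) n))
    = lin (Pmap h)).
  rewrite !(lin_comp HX). apply Dseq_ext; intro n. unfold lin, Pmap.
  rewrite (comp_pair HX). reflexivity.
Qed.

Lemma Pnmap_Dbar_lin n : forall (A B : ob X) (h : hom X A B),
  Pnmap (X := Dbar X) n (lin h) = lin (Pnmap n h).
Proof. induction n; intros; [reflexivity|]. cbn [Pnmap]. rewrite Pmap_Dbar_lin. apply IHn. Qed.

Lemma Tang_split (A B : ob X) (f : Dseq A B) :
  Tang f = (fun k => pair (Dcomp (lin (pi0 A A)) f k) (Dder f k)).
Proof.
  apply Dseq_ext; intro k. unfold Tang, Dcomp, Dder. rewrite (Tn_lin HX). unfold lin.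
  simpl. rewrite (comp1m HX). reflexivity.
Qed.

Lemma Tang_deltabar (A B : ob X) (f : Dseq A B) :
  Tang (X := Dbar X) (fun n => Diter n f) = (fun n => Diter n (Tang f)).
Proof.
  apply functional_extensionality_dep; intro k.
  rewrite (Tang_split f), Diter_pair, Diter_Dcomp, (Tn_lin HX).
  unfold Tang. change (@pi0 (Dbar X) A A) with (lin (pi0 A A)).
  rewrite Pnmap_Dbar_lin. reflexivity.
Qed.

Lemma Tn_deltabar n : forall (A B : ob X) (f : Dseq A B),
  Tn (X := Dbar X) n (fun k => Diter k f) = (fun k => Diter k (Tn n f)).
Proof. induction n; intros; [reflexivity|]. cbn [Tn]. rewrite Tang_deltabar. apply IHn. Qed.

Lemma Diter_deltabar n : forall (A B : ob X) (f : Dseq A B),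
  Diter (X := Dbar X) n (fun k => Diter k f) = (fun k => Diter k (Diter n f)).
Proof.
  induction n; intros; [reflexivity|]. cbn [Diter].
  change (Dder (X := Dbar X) (fun k => Diter k f)) with (fun k => Diter k (Dder f)).
  apply IHn.
Qed.

End Comultiplication.

Lemma DbarF_id X : Feq (DbarF (Fid X)) (Fid (Dbar X)).
Proof.
  exists (fun A => eq_refl). intros A B f. apply Dseq_ext; intro n. simpl.
  rewrite (proof_irrelevance _ (ePn (Fid X) n A) eq_refl). reflexivity.
Qed.

Lemma DbarF_comp X Y Z (F : FunData X Y) (G : FunData Y Z) :
  is_cart Y -> is_cart Z -> is_strict G ->
  Feq (DbarF (Fcomp F G)) (Fcomp (DbarF F) (DbarF G)).
Proof.
  intros HY HZ HG. exists (fun A => eq_refl). intros A B f. apply Dseq_ext; intro n. simpl.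
  rewrite !(eq_rect_dom HZ), (eq_rect_dom HY), (fhom_comp HG), (fhom_hom_of_eq HG).
  rewrite <- (compA HZ), <- (hom_of_eq_trans HZ). f_equal. apply hom_of_eq_irrelevant.
Qed.

Lemma epsbar_strict X : is_cart X -> is_strict (epsbar X).
Proof. intro HX. repeat split; intros; apply comp1m, HX. Qed.

Lemma deltabar_strict X : is_cart X -> is_strict (deltabar X).
Proof.
  intro HX. split; [|split; [|split]]; intros; simpl;
    apply functional_extensionality_dep; intro n.
  - assert (Did_lin : (fun k => @Did X k A) = lin (@idm X A)).
    { apply Dseq_ext; intro k. unfold lin. rewrite (compm1 HX). reflexivity. }
    rewrite Did_lin, (Diter_lin HX), (compm1 HX), (Did_Dbar HX). reflexivity.
  - rewrite Diter_Dcomp. unfold Dcomp at 2. rewrite (Tn_deltabar HX). reflexivity.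
  - change (Diter n (@lin X _ _ (@pi0 X A B))
      = Dcomp (Did (X := Dbar X) n (prod A B)) (@lin X _ _ (@pi0 X A B))).
    rewrite (Did_Dbar HX), (lin_comp HX), (Diter_lin HX). reflexivity.
  - change (Diter n (@lin X _ _ (@pi1 X A B))
      = Dcomp (Did (X := Dbar X) n (prod A B)) (@lin X _ _ (@pi1 X A B))).
    rewrite (Did_Dbar HX), (lin_comp HX), (Diter_lin HX). reflexivity.
Qed.

Lemma epsbar_natural X Y (F : FunData X Y) :
  Feq (Fcomp (DbarF F) (epsbar Y)) (Fcomp (epsbar X) F).
Proof. exists (fun A => eq_refl). reflexivity. Qed.

Lemma deltabar_natural X Y (F : FunData X Y) :
  is_cart Y ->
  Feq (Fcomp (DbarF F) (deltabar Y)) (Fcomp (deltabar X) (DbarF (DbarF F))).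
Proof.
  intro HY. exists (fun A => eq_refl). intros A B f.
  apply functional_extensionality_dep; intro n.
  change (Diter n (fhom (DbarF F) f : @Dseq Y (fob F A) (fob F B)) =
    eq_rect _ (fun Z : ob (Dbar Y) => hom (Dbar Y) Z (fob F B))
      (fhom (DbarF F) (Diter n f)) _ (ePn (DbarF F) n A)).
  rewrite eq_rect_Dseq, (Diter_DbarF F HY). apply Dseq_ext; intro k.
  unfold Dconj. rewrite (eq_rect_dom HY), (compm1 HY). f_equal.
  unfold Pncmp_inv. rewrite (Pnmap_hom_of_eq HY). apply hom_of_eq_irrelevant.
Qed.

Lemma deltabar_epsbar X : Feq (Fcomp (deltabar X) (epsbar (Dbar X))) (Fid (Dbar X)).
Proof. exists (fun A => eq_refl). reflexivity. Qed.

Lemma deltabar_DbarF_epsbar X :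
  Feq (Fcomp (deltabar X) (DbarF (epsbar X))) (Fid (Dbar X)).
Proof.
  exists (fun A => eq_refl). intros A B f. apply Dseq_ext; intro n. simpl.
  rewrite (proof_irrelevance _ (ePn (epsbar X) n A) eq_refl). apply Diter_zero.
Qed.

Lemma deltabar_coassoc X :
  Feq (Fcomp (deltabar X) (deltabar (Dbar X)))
      (Fcomp (deltabar X) (DbarF (deltabar X))).
Proof.
  exists (fun A => eq_refl). intros A B f. apply functional_extensionality_dep; intro n.
  simpl. rewrite (proof_irrelevance _ (ePn (deltabar X) n A) eq_refl).
  apply Diter_deltabar.
Qed.

Theorem proposition3p19 :
  is_comonad_on_CART Dbar DbarF epsbar deltabar.
Proof.
  unfold is_comonad_on_CART.
  repeat match goal with |- _ /\ _ => split end; intros.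
  - apply Dbar_is_cart; assumption.
  - apply DbarF_strict; assumption.
  - apply DbarF_id.
  - apply DbarF_comp; assumption.
  - apply epsbar_strict; assumption.
  - apply deltabar_strict; assumption.
  - apply epsbar_natural.
  - apply deltabar_natural; assumption.
  - apply deltabar_epsbar.
  - apply deltabar_DbarF_epsbar.
  - apply deltabar_coassoc.
Qed.
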